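(* Any projective plane curve invariant under $\mathcal{V}$ is defined by a homogeneous polynomial invariant under $\widetilde{\mathcal{V}}$.
   Context: Let $\rho = e^{2\pi i/3}$ and $\tau = (1+\sqrt{5})/2$. Define $Z = \mathrm{diag}(-1,1,-1)$, $T = \begin{pmatrix}0&0&1\\1&0&0\\0&1&0\end{pmatrix}$, $Q = \begin{pmatrix}1&0&0\\0&0&\rho^{2}\\0&-\rho&0\end{pmatrix}$, $P = \frac{1}{2}\begin{pmatrix}1&\tau^{-1}&-\tau\\ \tau^{-1}&\tau&1\\ \tau&-1&\tau^{-1}\end{pmatrix}$, all in $\mathrm{SL}(3,\mathbb{C})$. Let $\widetilde{\mathcal{V}} \subset \mathrm{SL}(3,\mathbb{C})$ be the group generated by $Z,T,Q,P$ and $\mathcal{V}\cong \mathfrak{A}_6$ its image in $\mathrm{PGL}(3,\mathbb{C})$, acting on $\mathbb{P}^2$ via $[A]\cdot(a:b:c)=[A(a,b,c)^t]$. A projective plane curve is a nonzero effective divisor on $\mathbb{P}^2$; it is invariant under $\mathcal{V}$ if $\sigma_*C = C$ for all $\sigma \in \mathcal{V}$. For $A\in \mathrm{GL}(3,\mathbb{C})$ and a homogeneous polynomial $f$, $f^A(\mathbf{x}) = f(A\mathbf{x})$; $f$ is $\widetilde{\mathcal{V}}$-invariant if $f^A = f$ for all $A\in\widetilde{\mathcal{V}}$. *)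

From HB Require Import structures.
From mathcomp Require Import all_boot all_order all_algebra all_field.
From mathcomp Require Import mpoly.
Set Implicit Arguments. Unset Strict Implicit. Unset Printing Implicit Defensive.
Import Order.TTheory GRing.Theory Num.Theory.
Local Open Scope ring_scope.

(* rho = e^{2 pi i/3} = (-1 + i sqrt 3)/2 ; sqrtC (-3) has positive imaginary part *)
Definition rho : algC := (-1 + sqrtC (-3)) / 2%:R.
Definition tau : algC := (1 + sqrtC 5%:R) / 2%:R.

Definition mx3 (a b c d e f g h i : algC) : 'M[algC]_3 :=
  \matrix_(r < 3, s < 3)
    nth 0 (nth [::] [:: [:: a; b; c]; [:: d; e; f]; [:: g; h; i]] r) s.

Definition Zm : 'M[algC]_3 := mx3 (-1) 0 0  0 1 0  0 0 (-1).
Definition Tm : 'M[algC]_3 := mx3 0 0 1  1 0 0  0 1 0.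
Definition Qm : 'M[algC]_3 := mx3 1 0 0  0 0 (rho ^+ 2)  0 (- rho) 0.
Definition Pm : 'M[algC]_3 :=
  2%:R^-1 *: mx3 1 tau^-1 (- tau)  tau^-1 tau 1  tau (-1) tau^-1.

Inductive inVt : 'M[algC]_3 -> Prop :=
| inVt1 : inVt 1%:M
| inVtZ : inVt Zm
| inVtT : inVt Tm
| inVtQ : inVt Qm
| inVtP : inVt Pm
| inVtM A B : inVt A -> inVt B -> inVt (A *m B)
| inVtV A : inVt A -> inVt (invmx A).

Definition mpoly_act (A : 'M[algC]_3) (f : {mpoly algC[3]}) : {mpoly algC[3]} :=
  f \mPo [tuple \sum_(j < 3) A i j *: 'X_j | i < 3].

(* A projective plane curve (nonzero effective divisor on P^2) is given by a
   nonzero homogeneous polynomial of positive degree, determined up to a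
   nonzero scalar. *)
Definition curve_poly (g : {mpoly algC[3]}) : Prop :=
  g != 0 /\ exists d : nat, (0 < d)%N /\ g \is d.-homog.

Definition same_curve (f g : {mpoly algC[3]}) : Prop :=
  exists2 c : algC, c != 0 & f = c *: g.

(* push-forward of the curve {g = 0} by [A] : it is {g o A^{-1} = 0} *)
Definition push_curve (A : 'M[algC]_3) (g : {mpoly algC[3]}) : {mpoly algC[3]} :=
  mpoly_act (invmx A) g.

(* the curve defined by g is invariant under V = image of Vtilde in PGL(3) *)
Definition V_invariant_curve (g : {mpoly algC[3]}) : Prop :=
  forall A, inVt A -> same_curve (push_curve A g) g.

Definition Vt_invariant_poly (f : {mpoly algC[3]}) : Prop :=
  forall A, inVt A -> mpoly_act A f = f.

From HB Require Import structures.
From mathcomp Require Import all_boot all_order all_algebra all_field.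
From mathcomp Require Import mpoly ring.

Set Implicit Arguments.
Unset Strict Implicit.
Unset Printing Implicit Defensive.
Import Order.TTheory GRing.Theory Num.Theory.
Local Open Scope ring_scope.

(* A defining polynomial g of a V-invariant curve is a semi-invariant:
   A g = chi(A) g for a character chi of Vtilde with values in C^*.  Vtilde
   is perfect, so chi is trivial and g itself is Vtilde-invariant.  Concretely,
   eight relations between Z, T, Q, P, read in the commutative group C^*, force
   chi to be 1 on the generators. *)

Lemma rho_sqr : rho ^+ 2 = - rho - 1.
Proof.
have sqrt3 : sqrtC (-3) ^+ 2 = -3 :> algC by rewrite sqrtCK.
by rewrite /rho; field: sqrt3.
Qed.

Lemma tau_sqr : tau ^+ 2 = tau + 1.
Proof.
have sqrt5 : sqrtC 5%:R ^+ 2 = 5%:R :> algC by rewrite sqrtCK.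
by rewrite /tau; field: sqrt5.
Qed.

Lemma tauV : tau^-1 = tau - 1.
Proof.
have tau_tau1 : tau * (tau - 1) = 1 by ring: tau_sqr.
have tau_neq0 : tau != 0.
  by apply: contra_eq_neq tau_tau1 => ->; rewrite mul0r eq_sym oner_neq0.
by apply: (mulfI tau_neq0); rewrite mulfV.
Qed.

Lemma mx3_mul a b c d e f g h i a' b' c' d' e' f' g' h' i' :
  mx3 a b c d e f g h i * mx3 a' b' c' d' e' f' g' h' i' =
  mx3 (a*a'+b*d'+c*g') (a*b'+b*e'+c*h') (a*c'+b*f'+c*i')
      (d*a'+e*d'+f*g') (d*b'+e*e'+f*h') (d*c'+e*f'+f*i')
      (g*a'+h*d'+i*g') (g*b'+h*e'+i*h') (g*c'+h*f'+i*i').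
Proof.
apply/matrixP => r s; rewrite !mxE !big_ord_recr big_ord0 /= !mxE.
by case: r => [[|[|[|//]]] ?]; case: s => [[|[|[|//]]] ?] /=; rewrite add0r.
Qed.

Lemma mx3_1 : 1 = mx3 1 0 0 0 1 0 0 0 1.
Proof.
apply/matrixP => r s; rewrite !mxE.
by case: r => [[|[|[|//]]] ?]; case: s => [[|[|[|//]]] ?].
Qed.

Lemma mx3_eq a b c d e f g h i a' b' c' d' e' f' g' h' i' :
  a = a' -> b = b' -> c = c' -> d = d' -> e = e' -> f = f' -> g = g' -> h = h' ->
  i = i' -> mx3 a b c d e f g h i = mx3 a' b' c' d' e' f' g' h' i'.
Proof. by move=> -> -> -> -> -> -> -> -> ->. Qed.

Lemma Pm_mx3 : Pm = mx3 (1/2) ((tau-1)/2) (-tau/2)  ((tau-1)/2) (tau/2) (1/2)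
                        (tau/2) (-1/2) ((tau-1)/2).
Proof.
rewrite /Pm tauV; apply/matrixP => r s; rewrite !mxE.
by case: r => [[|[|[|//]]] ?]; case: s => [[|[|[|//]]] ?] /=; rewrite mulrC.
Qed.

(* Associativity is restricted to matrices: at type algC, [mulrA] would also
   match inside the unfolded constants [rho] and [tau]. *)
Ltac mx3_solve :=
  rewrite ?exprS ?expr0 ?mulr1 ?(@mulrA 'M[algC]_3) /Zm /Tm /Qm ?Pm_mx3 ?mx3_1 !mx3_mul;
  apply: mx3_eq; by field: rho_sqr tau_sqr.

Lemma Zm_sqr : Zm ^+ 2 = 1.
Proof. mx3_solve. Qed.

Lemma Tm_cube : Tm ^+ 3 = 1.
Proof. mx3_solve. Qed.

Lemma ZmTm_cube : (Zm * Tm) ^+ 3 = 1.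
Proof. mx3_solve. Qed.

Lemma ZmPm_cube : (Zm * Pm) ^+ 3 = 1.
Proof. mx3_solve. Qed.

Lemma ZmTmPm_sqr : (Zm * Tm * Pm) ^+ 2 = 1.
Proof. mx3_solve. Qed.

Lemma Tm2Pm_sqr : (Tm ^+ 2 * Pm) ^+ 2 = 1.
Proof. mx3_solve. Qed.

Lemma ZmQm_sqr : (Zm * Qm) ^+ 2 = 1.
Proof. mx3_solve. Qed.

Lemma QmTmPm_cube : (Qm * Tm * Pm) ^+ 3 = 1.
Proof.
(* Normalising the product first: expanding the cube directly makes [field]
   some fifty times slower. *)
have -> : Qm * Tm * Pm =
    mx3 (tau/2) (-1/2) ((tau-1)/2)
        ((1 + rho - tau - rho*tau)/2) ((- tau - rho*tau)/2) ((-1 - rho)/2)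
        (- rho/2) ((rho - rho*tau)/2) (rho*tau/2).
  by mx3_solve.
mx3_solve.
Qed.

Lemma comp_mpolyA (R : comNzRingType) (n k l : nat) (p : {mpoly R[n]})
    (lq : n.-tuple {mpoly R[k]}) (lr : k.-tuple {mpoly R[l]}) :
  (p \mPo lq) \mPo lr = p \mPo [tuple tnth lq i \mPo lr | i < n].
Proof.
rewrite (comp_mpolyEX p lq) (comp_mpolyEX p) raddf_sum /=; apply: eq_bigr => m _.
rewrite comp_mpolyZ !comp_mpolyX rmorph_prod /=; congr (_ *: _).
by apply: eq_bigr => i _; rewrite rmorphXn tnth_mktuple.
Qed.

Lemma mpoly_actM A B f : mpoly_act B (mpoly_act A f) = mpoly_act (A * B) f.
Proof.
rewrite /mpoly_act comp_mpolyA; congr (f \mPo _); apply: eq_from_tnth => i.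
rewrite !tnth_mktuple raddf_sum /=.
under eq_bigr do rewrite comp_mpolyZ comp_mpolyXU -tnth_nth tnth_mktuple.
under [RHS]eq_bigr do rewrite mxE scaler_suml.
rewrite exchange_big; apply: eq_bigr => j _; rewrite scaler_sumr.
by apply: eq_bigr => k _; rewrite scalerA.
Qed.

Lemma mpoly_act1 f : mpoly_act 1 f = f.
Proof.
rewrite /mpoly_act -[RHS]comp_mpoly_id; congr (f \mPo _); apply: eq_from_tnth => i.
rewrite !tnth_mktuple (bigD1 i) //= mxE eqxx scale1r big1 ?addr0 // => j nji.
by rewrite mxE eq_sym (negbTE nji) scale0r.
Qed.

Lemma mpoly_actZ A c f : mpoly_act A (c *: f) = c *: mpoly_act A f.
Proof. exact: comp_mpolyZ. Qed.

Lemma mpoly_act_invmx A f : mpoly_act A f = f -> mpoly_act (invmx A) f = f.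
Proof.
move=> fA; have [A_unit | /invmx_out-> //] := boolP (A \in unitmx).
by rewrite -{1}fA mpoly_actM -mulmxE mulmxV // mpoly_act1.
Qed.

Lemma Vt_invariant_of_generators f :
  mpoly_act Zm f = f -> mpoly_act Tm f = f -> mpoly_act Qm f = f ->
  mpoly_act Pm f = f -> Vt_invariant_poly f.
Proof.
move=> fZ fT fQ fP A; elim=> {A} [||||| A B _ fA _ fB | A _ fA].
- exact: mpoly_act1.
- exact: fZ.
- exact: fT.
- exact: fQ.
- exact: fP.
- by rewrite -mpoly_actM fA fB.
- exact: mpoly_act_invmx.
Qed.

Lemma eq1_of_expr2_expr3 (R : pzRingType) (x : R) : x ^+ 2 = 1 -> x ^+ 3 = 1 -> x = 1.
Proof. by move=> x2 <-; rewrite exprS x2 mulr1. Qed.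

Lemma Vt_relations_abelian_trivial (R : comNzRingType) (z t q p : R) :
  z ^+ 2 = 1 -> t ^+ 3 = 1 -> (z * t) ^+ 3 = 1 -> (z * p) ^+ 3 = 1 ->
  (z * t * p) ^+ 2 = 1 -> (t ^+ 2 * p) ^+ 2 = 1 -> (z * q) ^+ 2 = 1 ->
  (q * t * p) ^+ 3 = 1 -> [/\ z = 1, t = 1, q = 1 & p = 1].
Proof.
move=> z2 t3 zt3 zp3 ztp2 t2p2 zq2 qtp3.
have z1 : z = 1 by apply: eq1_of_expr2_expr3; rewrite // -[RHS]zt3 exprMn t3 mulr1.
rewrite z1 !mul1r in zp3 ztp2 zq2.
have t2 : t ^+ 2 = 1 by rewrite -[LHS]mulr1 -[X in _ * X]ztp2 -t2p2 !exprMn mulrA -exprD.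
have t1 : t = 1 by apply: eq1_of_expr2_expr3.
rewrite t1 mul1r in ztp2.
have p1 : p = 1 by apply: eq1_of_expr2_expr3.
rewrite t1 p1 !mulr1 in qtp3.
by split=> //; apply: eq1_of_expr2_expr3.
Qed.

Definition semi_invariant (A : 'M[algC]_3) (c : algC) (g : {mpoly algC[3]}) :=
  mpoly_act A g = c *: g.

Section SemiInvariant.

Variable g : {mpoly algC[3]}.

Lemma semi_invariantM A B a b :
  semi_invariant A a g -> semi_invariant B b g -> semi_invariant (A * B) (a * b) g.
Proof.
by move=> gA gB; rewrite /semi_invariant -mpoly_actM gA mpoly_actZ gB scalerA.
Qed.

Lemma semi_invariantX n A a :
  semi_invariant A a g -> semi_invariant (A ^+ n) (a ^+ n) g.
Proof.
move=> gA; elim: n => [|n IHn]; first by rewrite /semi_invariant mpoly_act1 scale1r.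
by rewrite !exprS; apply: semi_invariantM.
Qed.

Hypothesis g_neq0 : g != 0.

Lemma semi_invariant_relation A a n :
  semi_invariant A a g -> A ^+ n = 1 -> a ^+ n = 1.
Proof.
move=> /(semi_invariantX n); rewrite /semi_invariant => + An1.
rewrite An1 mpoly_act1 -{1}[g]scale1r => /eqP.
by rewrite -subr_eq0 -scalerBl scaler_eq0 (negbTE g_neq0) orbF subr_eq0 eq_sym => /eqP.
Qed.

Lemma Vt_multipliers_trivial cZ cT cQ cP :
  semi_invariant Zm cZ g -> semi_invariant Tm cT g ->
  semi_invariant Qm cQ g -> semi_invariant Pm cP g ->
  [/\ cZ = 1, cT = 1, cQ = 1 & cP = 1].
Proof.
move=> gZ gT gQ gP; apply: Vt_relations_abelian_trivial.
- exact: semi_invariant_relation gZ Zm_sqr.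
- exact: semi_invariant_relation gT Tm_cube.
- exact: semi_invariant_relation (semi_invariantM gZ gT) ZmTm_cube.
- exact: semi_invariant_relation (semi_invariantM gZ gP) ZmPm_cube.
- exact: semi_invariant_relation (semi_invariantM (semi_invariantM gZ gT) gP) ZmTmPm_sqr.
- exact: semi_invariant_relation (semi_invariantM (semi_invariantX 2 gT) gP) Tm2Pm_sqr.
- exact: semi_invariant_relation (semi_invariantM gZ gQ) ZmQm_sqr.
- exact: semi_invariant_relation (semi_invariantM (semi_invariantM gQ gT) gP) QmTmPm_cube.
Qed.

End SemiInvariant.

Theorem mainTheorem9 (g : {mpoly algC[3]}) :
  curve_poly g -> V_invariant_curve g ->
  exists f : {mpoly algC[3]},
    same_curve f g /\ (exists d : nat, f \is d.-homog) /\ Vt_invariant_poly f.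
Proof.
move=> [g_neq0 [d [_ g_homog]]] g_inv.
have semi A : inVt A -> exists c, semi_invariant A c g.
  move=> /inVtV /g_inv [c _ gc]; exists c.
  by rewrite /semi_invariant -gc /push_curve invmxK.
have [[cZ gZ] [cT gT]] := (semi _ inVtZ, semi _ inVtT).
have [[cQ gQ] [cP gP]] := (semi _ inVtQ, semi _ inVtP).
have [cZ1 cT1 cQ1 cP1] := Vt_multipliers_trivial g_neq0 gZ gT gQ gP.
exists g; split; first by exists 1; rewrite ?oner_neq0 ?scale1r.
split; first by exists d.
apply: Vt_invariant_of_generators;
  by rewrite ?gZ ?gT ?gQ ?gP ?cZ1 ?cT1 ?cQ1 ?cP1 scale1r.
Qed.
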